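(* Fix $t\ge1$ and suppose (A1), (A3), (A4'), (A5') hold (the latter two for all $s\in[0:t-1]$), and that the maps $\mathsf P_{s;\ell}$ and $x\mapsto\partial_1\mathsf L_{s;k}(x,y)$ are differentiable so that the estimators below are defined. Then there is $c_t=c_t(t)>1$ such that, deterministically, $$\|\hat{\bm\tau}^{[t]}\|_{\mathrm{op}}\vee\|\hat{\bm\rho}^{[t]}\|_{\mathrm{op}}\le(K\Lambda)^{c_t}.$$
   Context: Notation: $[a:b]=\{a,\dots,b\}$, $[n]=[1:n]$; $\|\cdot\|_{\mathrm{op}}$ spectral norm, $\|f\|_{\mathrm{Lip}}$ Lipschitz constant; $\mathrm{diag}(\cdot)$ diagonal matrix. For $M\in\mathbb R^{(t-1)\times(t-1)}$, $\mathfrak O_t(M)\in\mathbb R^{t\times t}$ has $(\mathfrak O_t(M))_{r,s}=M_{r-1,s}$ for $r\in[2:t],s\in[1:t-1]$, other entries $0$; $\mathfrak O_1(\emptyset)=0$. Setting: $m,n\ge1$, $\phi=m/n$; $A\in\mathbb R^{m\times n}$ (any matrix) with rows $A_k^\top$; $\mu_\ast,\mu^{(0)}\in\mathbb R^n$, $\xi\in\mathbb R^m$; measurable $\mathcal F:\mathbb R^2\to\mathbb R$, $Y_k=\mathcal F(\langle A_k,\mu_\ast\rangle,\xi_k)$. Step sizes $\eta_s>0$; $\mathsf L_{s;k}:\mathbb R^2\to\mathbb R$ ($s\ge0$; $\partial_1,\partial_{11}$ derivatives in first argument), $\mathsf P_{s;\ell}:\mathbb R\to\mathbb R$ ($s\ge1$);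 $\partial_1\mathsf L_s(x,y)=(\partial_1\mathsf L_{s;k}(x_k,y_k))_k$, $\mathsf P_s(x)=(\mathsf P_{s;\ell}(x_\ell))_\ell$; $\mu^{(t)}=\mathsf P_t(\mu^{(t-1)}-\eta_{t-1}A^\top\partial_1\mathsf L_{t-1}(A\mu^{(t-1)},Y))$. Conditions ($K,\Lambda\ge2$): (A1) $1/K\le\phi\le K$; (A3) $\max_{s\in[0:t-1]}\eta_s\le\Lambda$; (A4') $\max_\ell\{|\mathsf P_{s+1;\ell}(0)|\vee\|\mathsf P_{s+1;\ell}\|_{\mathrm{Lip}}\}\le\Lambda$; (A5') $\max_k\{|\partial_1\mathsf L_{s;k}(0,\mathcal F(0,\xi_k))|\vee\|(u_1,u_2)\mapsto\partial_1\mathsf L_{s;k}(u_1,\mathcal F(u_2,\xi_k))\|_{\mathrm{Lip}}\}\le\Lambda$. Estimators (gradient descent inference algorithm): $\hat{\bm\rho}^{[0]}=\hat{\bm\rho}^{[0]}_\ell=\emptyset$; for $t\ge1$: $\hat{\bm L}^{[t]}_k=\mathrm{diag}(\{-\eta_{s-1}\partial_{11}\mathsf L_{s-1;k}((A\mu^{(s-1)})_k,Y_k)\}_{s\in[1:t]})$, $\hat{\bm\tau}^{[t]}_k=\phi[I_t-\hat{\bm L}^{[t]}_k\mathfrak O_t(\hat{\bm\rho}^{[t-1]})]^{-1}\hat{\bm L}^{[t]}_k$, $\hat{\bm\tau}^{[t]}=\frac1m\sum_k\hat{\bm\tau}^{[t]}_k$; $\hat{\bm P}^{[t]}_\ell=\mathrm{diag}(\{\mathsf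 P'_{s;\ell}((\mu^{(s-1)}-\eta_{s-1}A^\top\partial_1\mathsf L_{s-1}(A\mu^{(s-1)},Y))_\ell)\}_{s\in[1:t]})$, $\hat{\bm\rho}^{[t]}_\ell=\hat{\bm P}^{[t]}_\ell[I_t+(\hat{\bm\tau}^{[t]}+I_t)\mathfrak O_t(\hat{\bm\rho}^{[t-1]}_\ell)]$, $\hat{\bm\rho}^{[t]}=\frac1n\sum_\ell\hat{\bm\rho}^{[t]}_\ell$. *)

From HB Require Import structures.
From mathcomp Require Import all_boot all_order all_algebra.
From mathcomp Require Import all_classical all_reals all_analysis.
Set Implicit Arguments. Unset Strict Implicit. Unset Printing Implicit Defensive.
Import Order.TTheory GRing.Theory Num.Theory.
Local Open Scope ring_scope.
Local Open Scope classical_set_scope.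

Section GD.
Variable R : realType.

Definition lip1 (f : R -> R) (C : R) : Prop :=
  forall x y : R, `|f x - f y| <= C * `|x - y|.

Definition lip2 (g : R -> R -> R) (C : R) : Prop :=
  forall u1 u2 v1 v2 : R,
    `|g u1 u2 - g v1 v2| <= C * Num.sqrt ((u1 - v1) ^+ 2 + (u2 - v2) ^+ 2).

Definition vnorm (t : nat) (v : 'cV[R]_t) : R :=
  Num.sqrt (\sum_(i < t) v i 0 ^+ 2).

Definition opnorm (t : nat) (M : 'M[R]_t) : R :=
  sup [set x : R | exists v : 'cV[R]_t, vnorm v <= 1 /\ x = vnorm (M *m v)].

(* The shift operator O_t : for M of size (t-1), O_t(M)_{r,s} = M_{r-1,s}
   (1-based, r in [2:t], s in [1:t-1]), other entries 0. Here t = t'.+1. *)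
Definition Oshift (t' : nat) : 'M[R]_t' -> 'M[R]_t'.+1 :=
  match t' return 'M[R]_t' -> 'M[R]_t'.+1 with
  | 0 => fun _ => 0
  | u.+1 => fun M => \matrix_(r < u.+2, s < u.+2)
      if (0 < r)%N && (s < u.+1)%N then M (inord r.-1) (inord s) else 0
  end.

Definition d1 (Ls : R -> R -> R) (x y : R) : R := derive1 (fun u => Ls u y) x.
Definition d11 (Ls : R -> R -> R) (x y : R) : R :=
  derive1 (fun u => d1 Ls u y) x.

Variables (m n : nat) (A : 'M[R]_(m, n)) (F : R -> R -> R)
  (mustar mu0 : 'I_n -> R) (xi : 'I_m -> R) (eta : nat -> R)
  (L : nat -> 'I_m -> R -> R -> R) (P : nat -> 'I_n -> R -> R).

Definition phi : R := m%:R / n%:R.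

Definition Yv (k : 'I_m) : R := F (\sum_(j < n) A k j * mustar j) (xi k).

Definition Amul (x : 'I_n -> R) (k : 'I_m) : R := \sum_(j < n) A k j * x j.

Definition zpt (s : nat) (x : 'I_n -> R) (l : 'I_n) : R :=
  x l - eta s * \sum_(k < m) A k l * d1 (L s k) (Amul x k) (Yv k).

Fixpoint mu (s : nat) : 'I_n -> R :=
  match s with
  | 0 => mu0
  | s'.+1 => fun l => P s'.+1 l (zpt s' (mu s') l)
  end.

(* \hat L_k^{[t]} = diag(-eta_{s-1} d11 L_{s-1;k}((A mu^{(s-1)})_k, Y_k)), s in [1:t] *)
Definition Lhat (t : nat) (k : 'I_m) : 'M[R]_t :=
  diag_mx (\row_(i < t) (- eta i * d11 (L i k) (Amul (mu i) k) (Yv k))).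

(* \hat P_l^{[t]} = diag(P'_{s;l}(z_{s-1,l})), s in [1:t] *)
Definition Phat (t : nat) (l : 'I_n) : 'M[R]_t :=
  diag_mx (\row_(i < t) derive1 (P i.+1 l) (zpt i (mu i) l)).

Definition tau_of (t' : nat) (rho_prev : 'M[R]_t') : 'M[R]_t'.+1 :=
  m%:R^-1 *: \sum_(k < m)
     (phi *: (invmx (1%:M - Lhat t'.+1 k *m Oshift rho_prev) *m Lhat t'.+1 k)).

(* Returns (hat rho^{[t]}, (hat rho_l^{[t]})_l). *)
Fixpoint rho_all (t : nat) : 'M[R]_t * ('I_n -> 'M[R]_t) :=
  match t with
  | 0 => (0, fun _ => 0)
  | t'.+1 =>
      let rp := rho_all t' in
      let tau := tau_of rp.1 in
      let rl := fun l : 'I_n =>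
        Phat t'.+1 l *m (1%:M + (tau + 1%:M) *m Oshift (rp.2 l)) in
      (n%:R^-1 *: \sum_(l < n) rl l, rl)
  end.

Definition rho_hat (t : nat) : 'M[R]_t := (rho_all t).1.

(* hat tau^{[t]} for t >= 1, written with t = t'.+1 *)
Definition tau_hat (t' : nat) : 'M[R]_t'.+1 := tau_of (rho_hat t').

End GD.

From Pilot Require Import Defs.
From HB Require Import structures.
From mathcomp Require Import all_boot all_order all_algebra.
From mathcomp Require Import all_classical all_reals all_analysis.
From mathcomp Require Import ring lra zify.
Import Order.TTheory GRing.Theory Num.Theory.
Import numFieldNormedType.Exports.
Set Implicit Arguments. Unset Strict Implicit. Unset Printing Implicit Defensive.
Local Open Scope ring_scope.

(* Every estimator is lower triangular with entries bounded by a power of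
   K * Lam whose exponent depends only on t.  The Lipschitz bounds control the
   derivatives in Lhat and Phat by K * Lam.  The shift makes Lhat O_t(rho)
   strictly lower triangular, so I - Lhat O_t(rho) is unitriangular and its
   inverse, computed row by row, has entries at most (1 + t b)^t when those of
   Lhat O_t(rho) are at most b.  Propagating these bounds through the
   recursions for tau and rho, and bounding the operator norm of a t x t matrix
   by t^2 times its largest entry, gives the claim. *)


Section StrictlyTriangular.
Variable R : pzRingType.

Definition strict_trig_mx n (A : 'M[R]_n) : Prop :=
  forall i j : 'I_n, (i <= j)%N -> A i j = 0.

Lemma strict_trig_mx_is_trig n (A : 'M[R]_n) : strict_trig_mx A -> is_trig_mx A.
Proof. by move=> sA; apply/is_trig_mxP => i j /ltnW; apply: sA. Qed.

Lemma trig_mxD n (A B : 'M[R]_n) :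
  is_trig_mx A -> is_trig_mx B -> is_trig_mx (A + B).
Proof.
move=> /is_trig_mxP tA /is_trig_mxP tB; apply/is_trig_mxP => i j ij.
by rewrite mxE tA ?tB ?addr0.
Qed.

Lemma trig_mxZ n c (A : 'M[R]_n) : is_trig_mx A -> is_trig_mx (c *: A).
Proof.
by move=> /is_trig_mxP tA; apply/is_trig_mxP => i j ij; rewrite mxE tA ?mulr0.
Qed.

Lemma trig_mx_sum n q (A : 'I_q -> 'M[R]_n) :
  (forall k, is_trig_mx (A k)) -> is_trig_mx (\sum_k A k).
Proof.
move=> tA; apply/is_trig_mxP => i j ij; rewrite summxE big1 // => k _.
by have /is_trig_mxP -> := tA k.
Qed.

Lemma trig_mulmx n (A B : 'M[R]_n) :
  is_trig_mx A -> is_trig_mx B -> is_trig_mx (A *m B).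
Proof.
move=> /is_trig_mxP tA /is_trig_mxP tB; apply/is_trig_mxP => i j ij.
rewrite mxE big1 // => k _; case: (ltnP i k) => ik; first by rewrite tA ?mul0r.
by rewrite tB ?mulr0 // (leq_ltn_trans ik).
Qed.

Lemma trig_strict_mulmx n (A B : 'M[R]_n) :
  is_trig_mx A -> strict_trig_mx B -> strict_trig_mx (A *m B).
Proof.
move=> /is_trig_mxP tA sB i j ij; rewrite mxE big1 // => k _.
case: (ltnP i k) => ik; first by rewrite tA ?mul0r.
by rewrite sB ?mulr0 // (leq_trans ik).
Qed.

End StrictlyTriangular.

Section UnitriangularUnit.
Variable R : comUnitRingType.

Lemma unitmx_1_sub_strict n (N : 'M[R]_n) :
  strict_trig_mx N -> (1%:M - N) \in unitmx.
Proof.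
move=> sN; rewrite unitmxE det_trig; last first.
  apply: trig_mxD; first exact: scalar_mx_is_trig.
  by rewrite -scaleN1r; apply/trig_mxZ/strict_trig_mx_is_trig.
by rewrite big1 ?unitr1 // => i _; rewrite !mxE eqxx sN // subr0.
Qed.

End UnitriangularUnit.

Section EntryBounds.
Variable R : numFieldType.

Definition entry_le p q (A : 'M[R]_(p, q)) (b : R) : Prop :=
  forall i j, `|A i j| <= b.

Lemma entry_le_scalar1 n : entry_le (1%:M : 'M[R]_n) 1.
Proof. by move=> i j; rewrite mxE; case: (i == j); rewrite ?normr1 ?normr0. Qed.

Lemma entry_le_trans p q (A : 'M[R]_(p, q)) a b : entry_le A a -> a <= b -> entry_le A b.
Proof. by move=> hA ab i j; apply: le_trans ab. Qed.

Lemma entry_leD p q (A B : 'M[R]_(p, q)) a b :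
  entry_le A a -> entry_le B b -> entry_le (A + B) (a + b).
Proof. by move=> hA hB i j; rewrite mxE (le_trans (ler_normD _ _)) ?lerD. Qed.

Lemma entry_leZ p q c (A : 'M[R]_(p, q)) a :
  entry_le A a -> entry_le (c *: A) (`|c| * a).
Proof. by move=> hA i j; rewrite mxE normrM ler_wpM2l. Qed.

Lemma entry_le_mulmx p q r (A : 'M[R]_(p, q)) (B : 'M[R]_(q, r)) a b :
  entry_le A a -> entry_le B b -> entry_le (A *m B) (q%:R * (a * b)).
Proof.
move=> hA hB i j; rewrite mxE (le_trans (ler_norm_sum _ _ _)) //.
rewrite mulr_natl -[q in _ *+ q]card_ord -sumr_const.
by apply: ler_sum => k _; rewrite normrM ler_pM.
Qed.

Lemma entry_le_diag_mulmx p q (D : 'M[R]_p) (B : 'M[R]_(p, q)) a b :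
  is_diag_mx D -> entry_le D a -> entry_le B b -> entry_le (D *m B) (a * b).
Proof.
move=> /diag_mxP[d ->] hD hB i j; rewrite mul_diag_mx mxE normrM ler_pM //.
by have := hD i i; rewrite mxE eqxx mulr1n.
Qed.

Lemma entry_le_mulmx_diag p q (A : 'M[R]_(p, q)) (D : 'M[R]_q) a b :
  entry_le A a -> is_diag_mx D -> entry_le D b -> entry_le (A *m D) (a * b).
Proof.
move=> hA /diag_mxP[d ->] hD i j; rewrite mul_mx_diag mxE normrM ler_pM //.
by have := hD j j; rewrite mxE eqxx mulr1n.
Qed.

Lemma entry_le_avg p r q (A : 'I_q -> 'M[R]_(p, r)) b : (0 < q)%N ->
  (forall k, entry_le (A k) b) -> entry_le (q%:R^-1 *: \sum_k A k) b.
Proof.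
move=> q0 hA i j; rewrite mxE summxE normrM ger0_norm ?invr_ge0 ?ler0n //.
rewrite ler_pdivrMl ?ltr0n // (le_trans (ler_norm_sum _ _ _)) //.
rewrite mulr_natl -[q in _ *+ q]card_ord -sumr_const.
by apply: ler_sum => k _; apply: hA.
Qed.

End EntryBounds.

Arguments entry_le_scalar1 {R n}.

Section UnitriangularInverse.
Variable R : numFieldType.

Lemma invmx_1_sub_strict_bound n (N : 'M[R]_n) b :
  strict_trig_mx N -> 0 <= b -> entry_le N b ->
  is_trig_mx (invmx (1%:M - N)) /\ entry_le (invmx (1%:M - N)) ((1 + n%:R * b) ^+ n).
Proof.
move=> sN b0 hN; set Y := invmx _; set C := 1 + n%:R * b.
have C1 : 1 <= C by rewrite lerDl mulr_ge0.
(* By Y = 1 + N Y with N strictly lower triangular, row i of Y is determined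
   by the rows k < i. *)
have Yrec i j : Y i j = 1%:M i j + \sum_k N i k * Y k j.
  have YE : Y = 1%:M + N *m Y.
    by rewrite -{1}(mulmxV (unitmx_1_sub_strict sN)) -/Y mulmxBl mul1mx subrK.
  by rewrite {1}YE [LHS]mxE [(N *m Y) i j]mxE.
have rows (i : 'I_n) :
    (forall j : 'I_n, (i < j)%N -> Y i j = 0) /\ (forall j, `|Y i j| <= C ^+ i).
  have [r ir] := ubnP (nat_of_ord i); elim: r => // r IH in i ir *.
  have sum_lt j : \sum_l N i l * Y l j = \sum_(l : 'I_n | (l < i)%N) N i l * Y l j.
    rewrite (bigID (fun l : 'I_n => (l < i)%N)) /= addrC big1 ?add0r // => l.
    by rewrite -leqNgt => il; rewrite sN // mul0r.
  split=> [j ij|j]; rewrite Yrec sum_lt.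
    rewrite mxE -(inj_eq val_inj) /= ltn_eqF // big1 ?addr0 // => l li.
    by rewrite (IH l (leq_trans li ir)).1 ?mulr0 // (ltn_trans li).
  case: (posnP i) => [i0|i_gt0].
    rewrite big_pred0 => [|l]; last by rewrite i0.
    by rewrite addr0 i0 expr0 (entry_le_scalar1 i j).
  have -> : C ^+ i = C ^+ i.-1 + n%:R * b * C ^+ i.-1.
    by rewrite -[in LHS](prednK i_gt0) exprS mulrDl mul1r.
  apply: le_trans (ler_normD _ _) _.
  apply: lerD; first exact: le_trans (entry_le_scalar1 i j) (exprn_ege1 _ C1).
  apply: le_trans (ler_norm_sum _ _ _) _.
  apply: le_trans (_ : \sum_(l < n) b * C ^+ i.-1 <= _); last first.
    by rewrite sumr_const card_ord -mulrA mulr_natl.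
  rewrite big_mkcond; apply: ler_sum => l _; case: ifP => li.
    rewrite normrM ler_pM // (le_trans ((IH l (leq_trans li ir)).2 j)) //.
    by rewrite ler_weXn2l // -ltnS prednK.
  by rewrite mulr_ge0 // exprn_ge0 // (le_trans ler01).
split; first by apply/is_trig_mxP => i j; apply: (rows i).1.
by move=> i j; rewrite (le_trans ((rows i).2 j)) // ler_weXn2l // ltnW.
Qed.

End UnitriangularInverse.

Section RealMatrices.
Variable R : realType.

Lemma entry_le_Oshift t (M : 'M[R]_t) b : 0 <= b -> entry_le M b -> entry_le (Oshift M) b.
Proof.
case: t M => [|u] M b0 hM i j /=; rewrite mxE; first by rewrite normr0.
by case: ifP; rewrite ?normr0.
Qed.

Lemma Oshift_strict_trig t (M : 'M[R]_t) : is_trig_mx M -> strict_trig_mx (Oshift M).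
Proof.
case: t M => [|u] M /is_trig_mxP tM i j /= ij; rewrite mxE //.
case: ifP => // /andP[i0 ju]; apply: tM.
by rewrite !inordK //; case: (nat_of_ord i) i0 ij (ltn_ord i).
Qed.

Lemma le_entry_vnorm t (v : 'cV[R]_t) j : `|v j 0| <= vnorm v.
Proof.
rewrite /vnorm -sqrtr_sqr ler_wsqrtr // (bigD1 j) //= lerDl.
by apply: sumr_ge0 => i _; rewrite sqr_ge0.
Qed.

Lemma opnorm_le_entry t (M : 'M[R]_t) b : 0 <= b -> entry_le M b ->
  opnorm M <= t%:R ^+ 2 * b.
Proof.
move=> b0 hM; apply: ge_sup.
  exists (vnorm (M *m 0)), 0; split => //.
  by rewrite /vnorm big1 ?sqrtr0 // => i _; rewrite mxE expr0n.
move=> _ [v [v1 ->]].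
have tb0 : 0 <= t%:R * b by rewrite mulr_ge0.
have hMv : entry_le (M *m v) (t%:R * (b * 1)).
  by apply: entry_le_mulmx => // i j; rewrite ord1 (le_trans (le_entry_vnorm v i)).
rewrite mulr1 in hMv.
apply: (@le_trans _ _ (Num.sqrt ((t%:R * b) ^+ 2 *+ t))).
  rewrite /vnorm ler_wsqrtr // -[t in _ *+ t]card_ord -sumr_const.
  apply: ler_sum => i _; rewrite -real_normK ?num_real //.
  by rewrite lerXn2r ?nnegrE // hMv.
rewrite -[t%:R ^+ 2 * b]ger0_norm ?mulr_ge0 // -sqrtr_sqr ler_wsqrtr //.
have -> : (t%:R ^+ 2 * b) ^+ 2 = (t%:R * b) ^+ 2 * t%:R ^+ 2 :> R by ring.
rewrite -mulr_natr ler_wpM2l ?sqr_ge0 //.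
by case: t {M hM v v1 hMv tb0} => [|t]; rewrite ?expr0n // expr2 ler_peMl ?ler1n.
Qed.

Lemma norm_derive1_le_lip (f : R -> R) (x C : R) :
  derivable f x 1 -> lip1 f C -> `|derive1 f x| <= C.
Proof.
move=> df lf; rewrite derive1E /derive.
have quot_le : \forall h \near dnbhs (0 : R),
    `|h^-1 *: ((f \o shift x) (h *: 1) - f x)| <= C.
  apply: filterS (nbhs_dnbhs_neq 0) => h h0 /=.
  rewrite normrZ normrV ?unitfE // scaler1 ler_pdivrMl ?normr_gt0 // mulrC.
  by have := lf (h + x) x; rewrite addrK.
rewrite ler_norml; apply/andP; split.
  by apply: limr_ge => //; apply: filterS quot_le => h /[!ler_norml] /andP[].
by apply: limr_le => //; apply: filterS quot_le => h /[!ler_norml] /andP[].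
Qed.

End RealMatrices.

Section Powers.
Variables (R : numDomainType) (X : R).
Hypothesis X_ge2 : 2 <= X.

Let X_ge1 : 1 <= X. Proof. by apply: le_trans X_ge2; rewrite ler1n. Qed.

Lemma add1_le_exprS k : 1 + X ^+ k <= X ^+ k.+1.
Proof.
have Xk1 : 1 <= X ^+ k by apply: exprn_ege1 X_ge1.
rewrite exprS (le_trans (lerD Xk1 (lexx _))) // -mulr2n -mulr_natl.
by rewrite ler_pM2r // (lt_le_trans ltr01).
Qed.

Lemma natr_le_expr k : k%:R <= X ^+ k.
Proof.
elim: k => [|k IH]; first by rewrite expr0 ler01.
by rewrite -natr1 addrC (le_trans (lerD (lexx 1) IH)) ?add1_le_exprS.
Qed.

Lemma natr_mul_expr_le k a : k%:R * X ^+ a <= X ^+ (k + a).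
Proof. by rewrite exprD ler_wpM2r ?natr_le_expr // exprn_ge0 // (le_trans ler01 X_ge1). Qed.

End Powers.

(* [X ^+ tau_exp t' a] bounds the entries of tau^[t'+1] when those of rho^[t']
   are at most [X ^+ a], where X = K * Lam. *)
Definition tau_exp (t' a : nat) : nat := (a + 3 + t'.+1) * t'.+1 + 3.

Fixpoint rho_exp (t : nat) : nat :=
  if t is t'.+1 then t'.+1 + tau_exp t' (rho_exp t') + 3 + rho_exp t' else 0.

Definition opnorm_exp (t' : nat) : nat :=
  t'.+1 ^ 2 + rho_exp t'.+1 + tau_exp t' (rho_exp t').

Section Estimators.
Variables (R : realType) (m n : nat) (K Lam : R) (A : 'M[R]_(m, n))
  (F : R -> R -> R) (mustar mu0 : 'I_n -> R) (xi : 'I_m -> R) (eta : nat -> R)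
  (L : nat -> 'I_m -> R -> R -> R) (P : nat -> 'I_n -> R -> R) (tm : nat).
Hypotheses (m_gt0 : (0 < m)%N) (n_gt0 : (0 < n)%N) (K_ge2 : 2 <= K)
  (Lam_ge2 : 2 <= Lam) (eta_gt0 : forall s, 0 < eta s) (phi_le : phi R m n <= K)
  (eta_le : forall s, (s <= tm)%N -> eta s <= Lam)
  (P_lip : forall s l, (s <= tm)%N -> lip1 (P s.+1 l) Lam)
  (dL_lip : forall s k, (s <= tm)%N ->
     lip2 (fun u1 u2 => d1 (L s k) u1 (F u2 (xi k))) Lam)
  (P_derivable : forall s l x, (s <= tm)%N -> derivable (P s.+1 l) x 1)
  (dL_derivable : forall s k x y, (s <= tm)%N -> derivable (fun u => d1 (L s k) u y) x 1).

Let X := K * Lam.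
Let tau_of := tau_of A F mustar mu0 xi eta L P.
Let rho_all := rho_all A F mustar mu0 xi eta L P.
Let Lhat := Lhat A F mustar mu0 xi eta L P.
Let Phat := Phat A F mustar mu0 xi eta L P.

Lemma X_ge2 : 2 <= X.
Proof. by have := K_ge2; have := Lam_ge2; rewrite /X; nra. Qed.

Lemma K_le_X : K <= X.
Proof. by have := K_ge2; have := Lam_ge2; rewrite /X; nra. Qed.

Lemma Lam_le_X : Lam <= X.
Proof. by have := K_ge2; have := Lam_ge2; rewrite /X; nra. Qed.

Lemma X_exprn_ge0 a : 0 <= X ^+ a.
Proof. by rewrite exprn_ge0 // (le_trans _ X_ge2). Qed.

Lemma eta_d11_le s k x u : (s <= tm)%N ->
  `|- eta s * d11 (L s k) x (F u (xi k))| <= X ^+ 2.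
Proof.
move=> s_le; rewrite normrM normrN (gtr0_norm (eta_gt0 s)) expr2.
apply: ler_pM; rewrite ?(ltW (eta_gt0 s)) ?(le_trans (eta_le s_le) Lam_le_X) //.
apply: le_trans Lam_le_X; apply: norm_derive1_le_lip; first exact: dL_derivable.
by move=> v w; have := dL_lip k s_le v u w u; rewrite subrr expr0n addr0 sqrtr_sqr.
Qed.

Lemma P_derive1_le s l x : (s <= tm)%N -> `|derive1 (P s.+1 l) x| <= X.
Proof.
move=> s_le; apply: le_trans Lam_le_X.
by apply: norm_derive1_le_lip; [exact: P_derivable | exact: P_lip].
Qed.

Lemma Lhat_entry_le t k : (t <= tm.+1)%N -> entry_le (Lhat t k) (X ^+ 2).
Proof.
move=> t_le i j; rewrite /Lhat /Defs.Lhat mxE; case: (eqVneq i j) => _; last by rewrite mulr0n normr0 X_exprn_ge0.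
by rewrite mulr1n mxE; apply: eta_d11_le; rewrite -ltnS (leq_trans (ltn_ord i)).
Qed.

Lemma Phat_entry_le t l : (t <= tm.+1)%N -> entry_le (Phat t l) X.
Proof.
move=> t_le i j; rewrite /Phat /Defs.Phat mxE; case: (eqVneq i j) => _; last by rewrite mulr0n normr0 (le_trans _ X_ge2).
by rewrite mulr1n mxE; apply: P_derive1_le; rewrite -ltnS (leq_trans (ltn_ord i)).
Qed.

Lemma Lhat_Oshift_bound t' (rho : 'M[R]_t') a k : (t' <= tm)%N ->
  is_trig_mx rho -> entry_le rho (X ^+ a) ->
  strict_trig_mx (Lhat t'.+1 k *m Oshift rho) /\
  entry_le (Lhat t'.+1 k *m Oshift rho) (X ^+ (a + 2)).
Proof.
move=> t_le trho hrho; split.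
  exact: trig_strict_mulmx (diag_mx_is_trig _) (Oshift_strict_trig trho).
rewrite addnC exprD; apply: entry_le_diag_mulmx (diag_mx_is_diag _) _ _.
  exact: Lhat_entry_le.
exact: entry_le_Oshift (X_exprn_ge0 a) hrho.
Qed.

Lemma tau_summand_bound t' (rho : 'M[R]_t') a k : (t' <= tm)%N ->
  is_trig_mx rho -> entry_le rho (X ^+ a) ->
  let N := Lhat t'.+1 k *m Oshift rho in
  is_trig_mx (phi R m n *: (invmx (1%:M - N) *m Lhat t'.+1 k)) /\
  entry_le (phi R m n *: (invmx (1%:M - N) *m Lhat t'.+1 k)) (X ^+ tau_exp t' a).
Proof.
move=> t_le trho hrho N; set T := t'.+1.
have [sN hN] := Lhat_Oshift_bound k t_le trho hrho.
have [tY hY] := invmx_1_sub_strict_bound sN (X_exprn_ge0 _) hN.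
split; first exact/trig_mxZ/trig_mulmx/diag_mx_is_trig.
have base_le : 1 + T%:R * X ^+ (a + 2) <= X ^+ (a + 3 + T).
  have -> : (a + 3 + T = (T + (a + 2)).+1)%N by lia.
  exact: le_trans (lerD (lexx 1) (natr_mul_expr_le X_ge2 _ _)) (add1_le_exprS X_ge2 _).
have hY' : entry_le (invmx (1%:M - N)) (X ^+ ((a + 3 + T) * T)).
  apply: entry_le_trans hY _; rewrite exprM lerXn2r // nnegrE ?X_exprn_ge0 //.
  by rewrite addr_ge0 ?mulr_ge0 ?X_exprn_ge0.
have hYL := entry_le_mulmx_diag hY' (diag_mx_is_diag _) (Lhat_entry_le (t := T) k t_le).
apply: entry_le_trans (entry_leZ _ hYL) _.
have -> : X ^+ tau_exp t' a = X * (X ^+ ((a + 3 + T) * T) * X ^+ 2).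
  by rewrite /tau_exp -exprD -exprS addnS.
apply: ler_wpM2r; first by rewrite mulr_ge0 ?X_exprn_ge0.
by rewrite ger0_norm ?(le_trans phi_le K_le_X) // divr_ge0 ?ler0n.
Qed.

Lemma tau_of_bound t' (rho : 'M[R]_t') a : (t' <= tm)%N ->
  is_trig_mx rho -> entry_le rho (X ^+ a) ->
  is_trig_mx (tau_of rho) /\ entry_le (tau_of rho) (X ^+ tau_exp t' a).
Proof.
move=> t_le trho hrho; have hk k := tau_summand_bound k t_le trho hrho.
split; first by apply/trig_mxZ/trig_mx_sum => k; exact: (hk k).1.
exact: entry_le_avg m_gt0 (fun k => (hk k).2).
Qed.

Lemma rho_row_bound t' (tau : 'M[R]_t'.+1) (rl : 'M[R]_t') a b l : (t' <= tm)%N ->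
  is_trig_mx tau -> entry_le tau (X ^+ b) -> is_trig_mx rl -> entry_le rl (X ^+ a) ->
  let M := Phat t'.+1 l *m (1%:M + (tau + 1%:M) *m Oshift rl) in
  is_trig_mx M /\ entry_le M (X ^+ (t'.+1 + b + 3 + a)).
Proof.
move=> t_le ttau htau trl hrl M; set T := t'.+1.
have ttau1 : is_trig_mx (tau + 1%:M) := trig_mxD ttau (scalar_mx_is_trig _ _).
have htau1 : entry_le (tau + 1%:M) (X ^+ b.+1).
  apply: entry_le_trans (entry_leD htau entry_le_scalar1) _.
  by rewrite addrC add1_le_exprS // X_ge2.
have hprod : entry_le ((tau + 1%:M) *m Oshift rl) (X ^+ (T + (b.+1 + a))).
  apply: entry_le_trans (entry_le_mulmx htau1 (entry_le_Oshift (X_exprn_ge0 a) hrl)) _.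
  by rewrite -exprD natr_mul_expr_le // X_ge2.
have hinner : entry_le (1%:M + (tau + 1%:M) *m Oshift rl) (X ^+ (T + (b.+1 + a)).+1).
  exact: entry_le_trans (entry_leD entry_le_scalar1 hprod) (add1_le_exprS X_ge2 _).
split.
  apply: trig_mulmx (diag_mx_is_trig _) (trig_mxD (scalar_mx_is_trig _ _) _).
  exact/strict_trig_mx_is_trig/trig_strict_mulmx/Oshift_strict_trig.
have -> : (T + b + 3 + a = (T + (b.+1 + a)).+2)%N by lia.
by rewrite exprS; apply: entry_le_diag_mulmx hinner; [exact: diag_mx_is_diag | exact: Phat_entry_le].
Qed.

Lemma rho_all_bound t : (t <= tm.+1)%N ->
  (forall l, is_trig_mx ((rho_all t).2 l) /\ entry_le ((rho_all t).2 l) (X ^+ rho_exp t)) /\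
  is_trig_mx (rho_all t).1 /\ entry_le (rho_all t).1 (X ^+ rho_exp t).
Proof.
elim: t => [|t' IH] t_le.
  have zero_le : entry_le (0 : 'M[R]_0) (X ^+ 0) by case.
  by split=> [l|]; rewrite /= mx0_is_trig.
have [IHrows [trho hrho]] := IH (ltnW t_le).
have [ttau htau] := tau_of_bound t_le trho hrho.
have rows l := rho_row_bound l t_le ttau htau (IHrows l).1 (IHrows l).2.
split=> //; split; first by apply/trig_mxZ/trig_mx_sum => l; exact: (rows l).1.
exact: entry_le_avg n_gt0 (fun l => (rows l).2).
Qed.

Lemma estimators_opnorm_le t' : (t' <= tm)%N ->
  Num.max (opnorm (tau_hat A F mustar mu0 xi eta L P t'))
          (opnorm (rho_hat A F mustar mu0 xi eta L P t'.+1)) <= X ^+ opnorm_exp t'.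
Proof.
move=> t_le.
have [_ [trho hrho]] := rho_all_bound (leqW t_le).
have [_ htau] := tau_of_bound t_le trho hrho.
have [_ [_ hrho1]] := rho_all_bound (t := t'.+1) t_le.
have opnorm_bound_le e : (e <= opnorm_exp t' - t'.+1 ^ 2)%N ->
    t'.+1%:R ^+ 2 * X ^+ e <= X ^+ opnorm_exp t'.
  move=> e_le; rewrite -natrX (le_trans (natr_mul_expr_le X_ge2 _ _)) //.
  apply: ler_weXn2l; first by apply: le_trans X_ge2; rewrite ler1n.
  by move: e_le; rewrite /opnorm_exp; lia.
rewrite ge_max; apply/andP; split.
  apply: le_trans (opnorm_le_entry (X_exprn_ge0 _) htau) (opnorm_bound_le _ _).
  by rewrite /opnorm_exp; lia.
apply: le_trans (opnorm_le_entry (X_exprn_ge0 _) hrho1) (opnorm_bound_le _ _).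
by rewrite /opnorm_exp; lia.
Qed.

End Estimators.

Theorem lemma7p1 (R : realType) (t' : nat) :
  exists c : R, 1 < c /\
  forall (m n : nat) (K Lam : R) (A : 'M[R]_(m, n)) (F : R -> R -> R)
    (mustar mu0 : 'I_n -> R) (xi : 'I_m -> R) (eta : nat -> R)
    (L : nat -> 'I_m -> R -> R -> R) (P : nat -> 'I_n -> R -> R),
    (0 < m)%N -> (0 < n)%N -> 2 <= K -> 2 <= Lam ->
    (forall s, 0 < eta s) ->
    K^-1 <= phi R m n <= K ->
    (forall s, (s <= t')%N -> eta s <= Lam) ->
    (forall s (l : 'I_n), (s <= t')%N ->
       `|P s.+1 l 0| <= Lam /\ lip1 (P s.+1 l) Lam) ->
    (forall s (k : 'I_m), (s <= t')%N ->
       `|d1 (L s k) 0 (F 0 (xi k))| <= Lam /\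
       lip2 (fun u1 u2 => d1 (L s k) u1 (F u2 (xi k))) Lam) ->
    (forall s (l : 'I_n) (x : R), (s <= t')%N -> derivable (P s.+1 l) x 1) ->
    (forall s (k : 'I_m) (x y : R), (s <= t')%N ->
       derivable (fun u => L s k u y) x 1 /\
       derivable (fun u => d1 (L s k) u y) x 1) ->
    Num.max (opnorm (tau_hat A F mustar mu0 xi eta L P t'))
            (opnorm (rho_hat A F mustar mu0 xi eta L P t'.+1))
      <= powR (K * Lam) c.
Proof.
exists (opnorm_exp t')%:R; split; first by rewrite ltr1n /opnorm_exp /tau_exp; lia.
move=> m n K Lam A F mustar mu0 xi eta L P m_gt0 n_gt0 K_ge2 Lam_ge2 eta_gt0
  /andP[_ phi_le] eta_le hP hL P_derivable L_derivable.
rewrite powR_mulrn; last by rewrite mulr_ge0 // (le_trans _ K_ge2, le_trans _ Lam_ge2).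
apply: (estimators_opnorm_le A mustar mu0 m_gt0 n_gt0 K_ge2 Lam_ge2 eta_gt0 phi_le
  eta_le _ _ P_derivable _ (leqnn t')).
- by move=> s l s_le; case: (hP s l s_le).
- by move=> s k s_le; case: (hL s k s_le).
- by move=> s k x y s_le; case: (L_derivable s k x y s_le).
Qed.
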